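(* Let $a(n,k)$ be the number of non-squashing partitions of $n$ into exactly $k$ parts. Then $a(0,0)=1$, $a(n,0)=0$ for $n\ge1$, $a(n,k)=0$ for $k>n$, $a(n,1)=1$ for $n\ge1$, and for $m\ge1,k\ge1$: $$a(2m,k)=a(2m-1,k)+a(m,k-1),\qquad a(2m+1,k)=a(2m,k).$$ For every $k\ge1$, $$\sum_{m\ge0}a(m,k)x^m=\frac{x^{2^{k-1}}}{\prod_{j=0}^{k-1}\left(1-x^{2^j}\right)},$$ and for every $k\ge2$, $$\sum_{m\ge0}a(2m,k)x^m=\frac{x^{2^{k-2}}}{(1-x)\prod_{j=0}^{k-2}\left(1-x^{2^j}\right)}.$$ Consequently, for $k\ge1$, $a(n,k)$ equals the number of partitions of $n-2^{k-1}$ into powers of $2$ not exceeding $2^{k-1}$, and also equals the number of partitions of $n$ into powers of $2$ whose largest part is $2^{k-1}$.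
   Context: A partition $n=p_1+\cdots+p_k$ with $1\le p_1\le\cdots\le p_k$ is non-squashing if $p_1+\cdots+p_j\le p_{j+1}$ for all $1\le j\le k-1$. The empty partition is the unique partition of $0$ and has $0$ parts. *)

From HB Require Import structures.
From mathcomp Require Import all_boot all_order all_algebra.
Set Implicit Arguments. Unset Strict Implicit. Unset Printing Implicit Defensive.
Import GRing.Theory.

Definition is_partition (n : nat) (s : seq nat) : bool :=
  [&& sorted leq s, all (fun p => 0 < p) s & sumn s == n].

(* Non-squashing: p_1 + ... + p_j <= p_(j+1) for all 1 <= j <= k-1
   (0-indexed: sumn (take j s) <= nth 0 s j for 1 <= j < size s). *)
Definition non_squashing (s : seq nat) : bool :=
  all (fun j => sumn (take j s) <= nth 0 s j) (iota 1 (size s).-1).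

(* Every part of a partition of n is at most n, so tuples over 'I_n.+1
   enumerate all partitions of n with exactly k parts. *)

Definition a (n k : nat) : nat :=
  #|[pred t : k.-tuple 'I_n.+1 |
      is_partition n (map val t) && non_squashing (map val t)]|.

Definition npart (Q : pred (seq nat)) (n : nat) : nat :=
  \sum_(k < n.+1)
     #|[pred t : k.-tuple 'I_n.+1 | is_partition n (map val t) && Q (map val t)]|.

Definition is_pow2 (p : nat) : bool := p \in [seq 2 ^ e | e <- iota 0 p.+1].

(* Formal power series identity  (sum_m f m x^m) * Q(x) = P(x)  in Z[[x]],
   stated coefficientwise (the n-th coefficient of the product only depends
   on f 0, ..., f n). Since Q has constant term 1 below, this is the same as
   sum_m f m x^m = P / Q. *)
Local Open Scope ring_scope.
Definition series_mul_eq (f : nat -> int) (Q P : {poly int}) : Prop :=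
  forall n : nat, ((\poly_(i < n.+1) f i) * Q)`_n = P`_n.

From mathcomp Require Import all_boot all_order all_algebra zify.
Import GRing.Theory.

(* Deleting the largest part of a non-squashing partition of n into k+1 parts
   leaves a non-squashing partition of some t with 2t <= n into k parts, and
   every such partition extends back uniquely, by the part n - t.  Hence
   a(n, k+1) = sum_{t <= n/2} a(t, k).  The number c(m, K) of partitions of m
   into powers of 2 at most 2^K obeys the same halving recursion (drop the
   parts 1 and halve the others), whence a(n, k+1) = c(n - 2^k, k).  Splitting
   these partitions by whether their largest part is 2^K gives
   c(m, K) = c(m, K-1) + c(m - 2^K, K), which is the generating function
   identity with denominator prod_j (1 - x^(2^j)) and also yields the
   description of a(n, k+1) by the largest part. *)

Set Implicit Arguments.
Unset Strict Implicit.
Unset Printing Implicit Defensive.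

Lemma eq_count_uniq (T : eqType) (P : pred T) (s1 s2 : seq T) :
  uniq s1 -> uniq s2 -> {in P, s1 =i s2} -> count P s1 = count P s2.
Proof.
move=> uniq1 uniq2 eq12; rewrite -!size_filter.
apply/perm_size/uniq_perm; rewrite ?filter_uniq // => s.
by rewrite !mem_filter; case Ps: (P s); rewrite //= eq12.
Qed.

Lemma count_predI_predC (T : Type) (P Q : pred T) s :
  count P s = count (predI P Q) s + count (predI P (predC Q)) s.
Proof.
by elim: s => //= x s ->; case: (P x); case: (Q x); rewrite /= ?add0n ?addnS ?addSn.
Qed.

Lemma count_iota_eq1 N v (b : bool) (P : pred nat) :
  (forall x, P x = (x == v) && b) -> count P (iota 0 N) = (v < N) && b.
Proof.
move=> /eq_count ->; case: b.
  rewrite (eq_count (a2 := pred1 v)) => [|x]; last by rewrite andbT.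
  by rewrite count_uniq_mem ?iota_uniq // mem_iota andbT.
by rewrite andbF (eq_count (a2 := pred0)) ?count_pred0 // => x; rewrite andbF.
Qed.

Lemma sum_nat_of_bool (T : Type) (P : pred T) s : \sum_(x <- s) (P x : nat) = count P s.
Proof. by rewrite -sum1_count [RHS]big_mkcond. Qed.

Lemma sum_count_fibers (T : Type) (P : pred T) (f : T -> nat) s M :
  \sum_(t < M) count (fun x => P x && (f x == t)) s = count (fun x => P x && (f x < M)) s.
Proof.
elim: s => [|x s IH] /=; first by rewrite big1.
rewrite big_split /= IH; congr addn; case: (P x) => /=; last by rewrite big1.
elim: M {IH} => [|M IHM]; first by rewrite big_ord0.
by rewrite big_ord_recr /= IHM ltnS; case: ltngtP.
Qed.

Lemma sum_shift (g : nat -> nat) M N :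
  \sum_(t < N.+1) (if M <= t then g (t - M) else 0) =
  if M <= N then \sum_(t < (N - M).+1) g t else 0.
Proof.
elim: N => [|N IH]; first by case: M => [|M]; rewrite !big_ord_recr !big_ord0.
rewrite big_ord_recr /= IH; case: (leqP M N) => [le_MN|lt_NM].
  by rewrite (leqW le_MN) subSn // [RHS]big_ord_recr.
case: (ltngtP M N.+1) => [|_|->]; first by rewrite ltnS leqNgt lt_NM.
- by rewrite addn0.
- by rewrite subnn big_ord_recr big_ord0.
Qed.

Lemma half_subn_double n m : (n - m.*2)./2 = n./2 - m.
Proof. by rewrite -!divn2 -muln2; lia. Qed.

Fixpoint seqs_below (N k : nat) : seq (seq nat) :=
  if k is k'.+1 then [seq rcons s x | s <- seqs_below N k', x <- iota 0 N]
  else [:: [::]].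

Lemma mem_seqs_below N k s :
  (s \in seqs_below N k) = (size s == k) && all (fun x => x < N) s.
Proof.
elim: k s => [|k IH] s /=; first by rewrite inE; case: s.
apply/allpairsP/idP => [[[s' x] /= [s'_in x_in ->]]|].
  move: s'_in x_in; rewrite IH size_rcons all_rcons mem_iota => /andP[/eqP -> ->].
  by rewrite /= add0n eqxx => ->.
case/lastP: s => [//|s x]; rewrite size_rcons all_rcons eqSS => /andP[sz /andP[x_lt s_lt]].
by exists (s, x); rewrite /= IH sz s_lt mem_iota.
Qed.

Lemma seqs_below_uniq N k : uniq (seqs_below N k).
Proof.
elim: k => [|k IH] //=; apply: allpairs_uniq; rewrite ?iota_uniq //.
by move=> [s x] [s' x'] _ _ /= /rcons_inj.
Qed.

Lemma card_tuples_map_val N k (P : pred (seq nat)) :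
  #|[pred t : k.-tuple 'I_N | P (map val t)]| = count P (seqs_below N k).
Proof.
rewrite cardE /enum_mem size_filter -enumT.
rewrite -(count_map (fun t : k.-tuple 'I_N => map val t) P).
apply: eq_count_uniq.
- rewrite map_inj_uniq ?enum_uniq // => t1 t2 /(inj_map val_inj); exact: val_inj.
- exact: seqs_below_uniq.
- move=> s _; rewrite mem_seqs_below; apply/mapP/idP => [[t _ ->]|/andP[/eqP sz s_lt]].
    by rewrite size_map size_tuple eqxx /=; apply/allP => x /mapP[i _ ->].
  have sz' : size (pmap (insub : nat -> option 'I_N) s) == k.
    by rewrite size_pmap_sub; move: s_lt; rewrite all_count sz.
  exists (Tuple sz'); first by rewrite mem_enum.
  rewrite /= (pmap_filter (@insubK _ _ _)); apply/esym/all_filterP.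
  by apply: sub_all s_lt => x /= x_lt; case: insubP; rewrite ?x_lt.
Qed.

Lemma count_seqs_belowS N k (P : pred (seq nat)) :
  count P (seqs_below N k.+1) =
  \sum_(s <- seqs_below N k) count (fun x => P (rcons s x)) (iota 0 N).
Proof.
by rewrite /= count_flatten sumnE !big_map; apply: eq_bigr => s _; rewrite count_map.
Qed.

Lemma count_seqs_below_widen N N' k (P : pred (seq nat)) :
  N <= N' -> (forall s, P s -> all (fun x => x < N) s) ->
  count P (seqs_below N k) = count P (seqs_below N' k).
Proof.
move=> leNN' P_lt; apply: eq_count_uniq; rewrite ?seqs_below_uniq // => s /P_lt s_lt.
rewrite !mem_seqs_below s_lt (sub_all _ s_lt) // => x /leq_trans; exact.
Qed.

Definition seqs_upto N L := flatten [seq seqs_below N k | k <- iota 0 L].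

Lemma mem_seqs_upto N L s :
  (s \in seqs_upto N L) = (size s < L) && all (fun x => x < N) s.
Proof.
apply/flattenP/idP => [[u /mapP[k]]|/andP[lt_sL s_lt]].
  by rewrite mem_iota => /andP[_ lt_kL] -> /[!mem_seqs_below] /andP[/eqP -> ->]; rewrite lt_kL.
exists (seqs_below N (size s)); last by rewrite mem_seqs_below eqxx.
by apply: map_f; rewrite mem_iota.
Qed.

Lemma seqs_upto_uniq N L : uniq (seqs_upto N L).
Proof.
elim: L => [|L IH] //; rewrite /seqs_upto -addn1 iotaD map_cat flatten_cat /= cats0.
rewrite cat_uniq IH seqs_below_uniq andbT /=; apply/hasP => -[s].
by rewrite mem_seqs_below mem_seqs_upto => /andP[/eqP -> _]; rewrite ltnn.
Qed.

Lemma count_seqs_uptoS N L (P : pred (seq nat)) :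
  count P (seqs_upto N L.+1) =
  P [::] + \sum_(s <- seqs_upto N L) count (fun x => P (rcons s x)) (iota 0 N).
Proof.
rewrite /seqs_upto big_flatten big_map /= count_flatten; congr addn.
rewrite (iotaDl 1 0) sumnE !big_map; apply: eq_bigr => k _.
exact: count_seqs_belowS.
Qed.

Lemma count_seqs_upto_widen N N' L L' (P : pred (seq nat)) :
  N <= N' -> L <= L' -> (forall s, P s -> (size s < L) && all (fun x => x < N) s) ->
  count P (seqs_upto N L) = count P (seqs_upto N' L').
Proof.
move=> leNN' leLL' P_bnd; apply: eq_count_uniq; rewrite ?seqs_upto_uniq // => s.
move=> /P_bnd /andP[lt_sL s_lt]; rewrite !mem_seqs_upto lt_sL s_lt (leq_trans lt_sL) //.
by rewrite (sub_all _ s_lt) // => x /leq_trans; apply.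
Qed.

Lemma npartE (Q : pred (seq nat)) n :
  npart Q n = count (fun s => is_partition n s && Q s) (seqs_upto n.+1 n.+1).
Proof.
rewrite /npart /seqs_upto count_flatten sumnE !big_map.
rewrite -[in RHS](subn0 n.+1) -/(index_iota 0 n.+1) big_mkord.
by apply: eq_bigr => k _; apply: card_tuples_map_val.
Qed.

(** * Partitions *)

Lemma sorted_leq_rcons s x : sorted leq (rcons s x) = sorted leq s && (last 0 s <= x).
Proof. by case: s => [|y s] //=; rewrite rcons_path. Qed.

Lemma sorted_leq_last s x : sorted leq s -> x \in s -> x <= last 0 s.
Proof.
move=> s_sorted x_in; rewrite -(nth_index 0 x_in) -nth_last.
have s_gt0 : 0 < size s by case: s x_in s_sorted.
apply: sorted_leq_nth; rewrite ?inE ?index_mem ?prednK //; first exact: leq_trans.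
by rewrite -ltnS prednK // index_mem.
Qed.

Lemma leq_sumn s x : x \in s -> x <= sumn s.
Proof.
elim: s => [|y s IH] //=; rewrite inE => /orP[/eqP ->|/IH]; first exact: leq_addr.
by move/leq_trans; apply; apply: leq_addl.
Qed.

Lemma last_leq_sumn s : last 0 s <= sumn s.
Proof. by have := mem_last 0 s; rewrite inE => /orP[/eqP ->|/leq_sumn]. Qed.

Lemma part_leq_partition n s x : is_partition n s -> x \in s -> x <= n.
Proof. by case/and3P => _ _ /eqP <-; apply: leq_sumn. Qed.

Lemma size_leq_partition n s : is_partition n s -> size s <= n.
Proof.
case/and3P => _ + /eqP <-; elim: s => //= x s IH /andP[x_gt0 /IH]; lia.
Qed.

(** * Non-squashing partitions *)

Lemma non_squashing_rcons s x :
  non_squashing (rcons s x) = non_squashing s && (sumn s <= x).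
Proof.
rewrite /non_squashing size_rcons.
case size_s: (size s) => [|m]; first by rewrite (size0nil size_s).
have -> : iota 1 m.+2.-1 = iota 1 m ++ [:: m.+1] by rewrite -(iotaD 1 m 1) addn1.
rewrite all_cat /= andbT -cats1.
congr andb.
  apply: eq_in_all => j; rewrite mem_iota => /andP[_ j_lt].
  by rewrite takel_cat ?nth_cat ?ifT //; lia.
by rewrite -size_s take_size_cat // nth_cat ltnn subnn.
Qed.

Definition ns_partition n s := is_partition n s && non_squashing s.

Lemma ns_partition_rcons n s x :
  ns_partition n (rcons s x) =
  (x == n - sumn s) && [&& ns_partition (sumn s) s, (sumn s).*2 <= n & 0 < n].
Proof.
rewrite /ns_partition /is_partition non_squashing_rcons sorted_leq_rcons.
rewrite all_rcons sumn_rcons eqxx andbT -addnn.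
have := last_leq_sumn s.
case: (sorted leq s); case: (all _ s); case: (non_squashing s); rewrite /= ?andbF //.
by move=> ?; apply/idP/idP; lia.
Qed.

Lemma a_count n k : a n k = count (ns_partition n) (seqs_below n.+1 k).
Proof. exact: card_tuples_map_val. Qed.

Lemma a0 n : a n 0 = (n == 0).
Proof. by rewrite a_count /= addn0 /ns_partition /is_partition /= andbT eq_sym. Qed.

Lemma aS n k : a n k.+1 = if n is 0 then 0 else \sum_(t < n./2.+1) a t k.
Proof.
rewrite a_count count_seqs_belowS.
under eq_bigr => s _ do rewrite (count_iota_eq1 _ (ns_partition_rcons n s)).
rewrite sum_nat_of_bool; case: n => [|n].
  by rewrite (eq_count (a2 := pred0)) ?count_pred0 // => s; rewrite !andbF.
set P := fun s : seq nat => ns_partition (sumn s) s.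
rewrite (eq_count (a2 := fun s => P s && (sumn s < n.+1./2.+1))) => [|s]; last first.
  by rewrite [_ - _ < _]ltnS leq_subr [sumn s < _]ltnS geq_half_double andbT.
rewrite -(sum_count_fibers P sumn); apply: eq_bigr => t _.
rewrite a_count (eq_count (a2 := ns_partition t)) => [|s]; last first.
  by rewrite /P /ns_partition /is_partition eqxx; case: (sumn s == t); rewrite ?andbF ?andbT.
have t_le : t <= n.+1 by move: (ltn_ord t); rewrite ltnS geq_half_double; lia.
symmetry; apply: count_seqs_below_widen => [|s /andP[t_part _]]; first by rewrite ltnS.
by apply/allP => x /(part_leq_partition t_part).
Qed.

Lemma aS_gt0 n k : 0 < n -> a n k.+1 = \sum_(t < n./2.+1) a t k.
Proof. by case: n => // n _; rewrite aS. Qed.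

Lemma a_even m k :
  0 < m -> a (2 * m) k.+1 = a (2 * m - 1) k.+1 + a m k.
Proof.
move=> m_gt0; rewrite !aS_gt0 ?subn_gt0; try lia.
have -> : (2 * m)./2 = m by rewrite -divn2; lia.
have -> : (2 * m - 1)./2.+1 = m by rewrite -divn2; lia.
by rewrite big_ord_recr.
Qed.

Lemma a_odd m k : 0 < m -> a (2 * m + 1) k = a (2 * m) k.
Proof.
case: k => [|k] m_gt0; first by rewrite !a0; case: m m_gt0.
rewrite !aS_gt0 ?addn1 ?muln_gt0 //.
by have -> : (2 * m).+1./2 = (2 * m)./2 by rewrite -!divn2; lia.
Qed.

Lemma a_double i k : a (2 * i) k.+2 = \sum_(t < i.+1) a t k.+1.
Proof.
case: i => [|i]; first by rewrite big_ord1 !aS.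
by rewrite aS mul2n doubleK.
Qed.

(** * Partitions into powers of 2 *)

Fixpoint pow2_parts (n K : nat) : nat :=
  if K is K'.+1 then \sum_(t < n./2.+1) pow2_parts t K' else 1.
Arguments pow2_parts : simpl never.

Lemma pow2_partsS n K : pow2_parts n K.+1 = \sum_(t < n./2.+1) pow2_parts t K.
Proof. by []. Qed.

Lemma a_pow2_parts k n : a n k.+1 = if 2 ^ k <= n then pow2_parts (n - 2 ^ k) k else 0.
Proof.
elim: k n => [|k IH] [|n]; rewrite aS.
- by [].
- by under eq_bigr do rewrite a0; rewrite big_ord_recl big1.
- by rewrite leqNgt expn_gt0.
under eq_bigr do rewrite IH.
rewrite (sum_shift (pow2_parts^~ k)) geq_half_double expnSr muln2.
by case: ifP => // _; rewrite pow2_partsS half_subn_double.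
Qed.

Lemma a_gt n k : n < k -> a n k = 0.
Proof.
case: k => [//|k] lt_nk; rewrite a_pow2_parts ifN // -ltnNge.
exact: leq_ltn_trans (ltn_expl k (ltnSn 1)).
Qed.

Lemma pow2_parts_rec K n :
  pow2_parts n K.+1 =
  pow2_parts n K + (if 2 ^ K.+1 <= n then pow2_parts (n - 2 ^ K.+1) K.+1 else 0).
Proof.
elim: K n => [|K IH] n.
  have pow2_parts1 m : pow2_parts m 1 = m./2.+1 by rewrite pow2_partsS sum1_card card_ord.
  by rewrite !pow2_parts1 -[pow2_parts n 0]/1 expn1; case: ifP; rewrite -!divn2; lia.
rewrite pow2_partsS; under eq_bigr do rewrite IH.
rewrite big_split -pow2_partsS (sum_shift (pow2_parts^~ K.+1)) geq_half_double.
rewrite [2 ^ K.+2]expnSr muln2; case: ifP => // _.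
by rewrite [pow2_parts _ K.+2]pow2_partsS half_subn_double.
Qed.

Lemma is_pow2P p : reflect (exists e, p = 2 ^ e) (is_pow2 p).
Proof.
apply: (iffP mapP) => [[e _ ->]|[e ->]]; first by exists e.
by exists e => //; rewrite mem_iota add0n ltnS (ltnW (ltn_expl _ _)).
Qed.

Lemma is_pow2_exp e : is_pow2 (2 ^ e).
Proof. by apply/is_pow2P; exists e. Qed.

Lemma is_pow2_gt0 p : is_pow2 p -> 0 < p.
Proof. by case/is_pow2P => e ->; rewrite expn_gt0. Qed.

Lemma is_pow2_leq_half p K : is_pow2 p -> p < 2 ^ K.+1 -> p <= 2 ^ K.
Proof. by case/is_pow2P => e ->; rewrite ltn_exp2l // leq_exp2l. Qed.

Definition pow2_bounded K s := all (fun p => is_pow2 p && (p <= 2 ^ K)) s.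

Definition pow2_partition K n s := is_partition n s && pow2_bounded K s.

Lemma pow2_partition_bounds K n s :
  pow2_partition K n s -> (size s < n.+1) && all (fun x => x < n.+1) s.
Proof.
case/andP => s_part _; rewrite ltnS size_leq_partition //.
by apply/allP => x /(part_leq_partition s_part).
Qed.

Lemma npart_pow2_bounded K n :
  npart (pow2_bounded K) n = count (pow2_partition K n) (seqs_upto n.+1 n.+1).
Proof. exact: npartE. Qed.

Lemma npart_pow2_bounded0 n : npart (pow2_bounded 0) n = 1.
Proof.
rewrite npart_pow2_bounded (eq_count (a2 := pred1 (nseq n 1))) => [|s].
  by rewrite count_uniq_mem ?seqs_upto_uniq // mem_seqs_upto size_nseq ltnSn all_nseq; case: n.
apply/andP/eqP => [[/and3P[_ _ /eqP <-] s_bnd]|->].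
  have /all_pred1P -> : all (pred1 1) s.
    by apply: sub_all s_bnd => p /andP[/is_pow2_gt0 p_gt0 p_le1]; rewrite /= eqn_leq p_le1.
  by rewrite sumn_nseq mul1n.
rewrite /is_partition /pow2_bounded sumn_nseq mul1n eqxx !all_nseq (is_pow2_exp 0).
by split=> //; elim: n => [|[|n] IH] //=; rewrite leqnn.
Qed.

Lemma pow2_partition_last K n s : pow2_partition K n s -> last 0 s <= 2 ^ K.
Proof.
case/andP => _ /allP s_bnd.
by have := mem_last 0 s; rewrite inE => /orP[/eqP ->|/s_bnd /andP[]].
Qed.

Lemma pow2_partition_lastN K n s :
  pow2_partition K.+1 n s && (last 0 s != 2 ^ K.+1) = pow2_partition K n s.
Proof.
have ltK : 2 ^ K < 2 ^ K.+1 by rewrite ltn_exp2l.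
apply/idP/idP => [/andP[s_pow last_neq]|s_pow].
  have := pow2_partition_last s_pow; rewrite leq_eqVlt (negbTE last_neq) /= => last_lt.
  case/andP: s_pow => /[dup] s_part /and3P[s_sorted _ _] s_bnd.
  rewrite /pow2_partition s_part; apply/allP => p p_in.
  have /andP[p_pow _] := allP s_bnd p p_in; rewrite p_pow /=.
  apply: is_pow2_leq_half => //; exact: leq_ltn_trans (sorted_leq_last s_sorted p_in) last_lt.
have last_le := pow2_partition_last s_pow.
case/andP: s_pow => s_part s_bnd; rewrite /pow2_partition s_part /=.
rewrite neq_ltn (leq_ltn_trans last_le ltK) andbT.
by apply: sub_all s_bnd => p /andP[-> /leq_trans]; apply; apply: ltnW.
Qed.

Lemma pow2_partition_rcons K n s x :
  pow2_partition K n (rcons s x) && (last 0 (rcons s x) == 2 ^ K) =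
  (x == 2 ^ K) && (pow2_partition K (n - 2 ^ K) s && (2 ^ K <= n)).
Proof.
rewrite last_rcons; case: (x =P 2 ^ K) => [->|]; last by rewrite andbF.
rewrite /pow2_partition /pow2_bounded /is_partition sorted_leq_rcons !all_rcons.
rewrite sumn_rcons is_pow2_exp leqnn expn_gt0 /= andbT.
case s_bnd: (all (fun p => is_pow2 p && (p <= 2 ^ K)) s); rewrite ?andbF //=.
have last_le : last 0 s <= 2 ^ K.
  have := mem_last 0 s; rewrite inE => /orP[/eqP -> //|/(allP s_bnd)/andP[]//].
rewrite last_le !andbT; case: (sorted leq s); case: (all _ s) => //=.
by apply/idP/idP; lia.
Qed.

Lemma count_pow2_partition_last K n :
  count (fun s => pow2_partition K n s && (last 0 s == 2 ^ K)) (seqs_upto n.+1 n.+1) =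
  if 2 ^ K <= n then npart (pow2_bounded K) (n - 2 ^ K) else 0.
Proof.
rewrite count_seqs_uptoS [last _ [::]]/= eq_sym expn_eq0 andbF add0n.
under eq_bigr => s _ do rewrite (count_iota_eq1 _ (pow2_partition_rcons K n s)).
rewrite sum_nat_of_bool; case: ifP => le_Kn; last first.
  by rewrite (eq_count (a2 := pred0)) ?count_pred0 // => s; rewrite !andbF.
rewrite (eq_count (a2 := pow2_partition K (n - 2 ^ K))) => [|s]; last first.
  by rewrite ltnS le_Kn andbT.
have K_gt0 : 0 < 2 ^ K by rewrite expn_gt0.
rewrite npart_pow2_bounded; symmetry.
by apply: count_seqs_upto_widen => [||s /pow2_partition_bounds //]; lia.
Qed.

Lemma npart_pow2_bounded_rec K n :
  npart (pow2_bounded K.+1) n =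
  npart (pow2_bounded K) n +
  (if 2 ^ K.+1 <= n then npart (pow2_bounded K.+1) (n - 2 ^ K.+1) else 0).
Proof.
rewrite -count_pow2_partition_last !npart_pow2_bounded addnC.
rewrite (count_predI_predC _ (fun s => last 0 s == 2 ^ K.+1)); congr addn.
by apply: eq_count => s; rewrite /= pow2_partition_lastN.
Qed.

Lemma npart_pow2_bounded_parts K n : npart (pow2_bounded K) n = pow2_parts n K.
Proof.
elim: K n => [|K IH] n; first exact: npart_pow2_bounded0.
elim/ltn_ind: n => n IHn.
rewrite npart_pow2_bounded_rec pow2_parts_rec IH; case: ifP => // le_Kn.
by rewrite IHn // -subn_gt0 subKn // expn_gt0.
Qed.

Lemma a_npart_pow2_max n k :
  a n k.+1 = npart (fun s => all is_pow2 s && (last 0 s == 2 ^ k)) n.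
Proof.
rewrite a_pow2_parts -npart_pow2_bounded_parts -count_pow2_partition_last npartE.
apply: eq_count => s; rewrite /pow2_partition /pow2_bounded.
case: eqP => [last_s|]; rewrite ?andbF //= !andbT.
case s_part: (is_partition n s) => //=; apply: eq_in_all => p p_in /=.
by rewrite -last_s (sorted_leq_last _ p_in) ?andbT //; case/and3P: s_part.
Qed.

(** * Generating functions *)

Local Open Scope ring_scope.

Definition series_coef (f : nat -> int) (Q : {poly int}) n :=
  ((\poly_(i < n.+1) f i) * Q)`_n.

Lemma eq_series_coef f g Q n : f =1 g -> series_coef f Q n = series_coef g Q n.
Proof. by move=> eq_fg; rewrite /series_coef (@eq_poly _ _ _ g). Qed.

Lemma coefMl_eq (p p' Q : {poly int}) n :
  (forall i, (i <= n)%N -> p`_i = p'`_i) -> (p * Q)`_n = (p' * Q)`_n.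
Proof. by move=> eq_pp'; rewrite !coefM; apply: eq_bigr => j _; rewrite eq_pp' // -ltnS. Qed.

Lemma series_coef1 f n : series_coef f 1 n = f n.
Proof. by rewrite /series_coef mulr1 coef_poly ltnSn. Qed.

Lemma series_coef_1subXn f m Q n :
  series_coef f ((1 - 'X^m) * Q) n =
  series_coef (fun i => f i - (if (m <= i)%N then f (i - m)%N else 0)) Q n.
Proof.
rewrite /series_coef mulrA; apply: coefMl_eq => i le_in.
rewrite mulrBr mulr1 coefB coefMXn !coef_poly ltnS le_in.
by case: (ltnP i m) => [|le_mi]; rewrite ?subr0 // ifT //; lia.
Qed.

Lemma series_coef_shift g Q M n :
  series_coef (fun i => if (M <= i)%N then g (i - M)%N else 0) Q n =
  if (M <= n)%N then series_coef g Q (n - M) else 0.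
Proof.
rewrite /series_coef; case: leqP => [le_Mn|lt_nM].
  have -> : \poly_(i < n.+1) (if (M <= i)%N then g (i - M)%N else 0) =
            \poly_(i < (n - M).+1) g i * 'X^M.
    apply/polyP => i; rewrite coefMXn !coef_poly ltnNge.
    case: (leqP M i) => /= [le_Mi|]; last by case: ifP.
    by congr (if _ then _ else _); apply/idP/idP; lia.
  by rewrite mulrAC coefMXn ltnNge le_Mn.
rewrite (_ : \poly_(i < n.+1) _ = 0) ?mul0r ?coef0 //; apply/polyP => i.
rewrite coef_poly coef0 ltnS; case: leqP => // le_in.
by rewrite leqNgt (leq_ltn_trans le_in lt_nM).
Qed.

Lemma series_pow2_parts K n :
  series_coef (fun i => (pow2_parts i K)%:Z) (\prod_(j < K.+1) (1 - 'X^(2 ^ j))) n =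
  (n == 0)%:R.
Proof.
elim: K n => [|K IH] n.
  rewrite big_ord1 -[_ - _]mulr1 series_coef_1subXn series_coef1.
  by case: n.
rewrite big_ord_recr /= mulrC series_coef_1subXn -IH; apply: eq_series_coef => i.
by rewrite pow2_parts_rec PoszD; case: ifP => _; rewrite ?addrK ?addr0 ?subr0.
Qed.

Lemma series_a k n :
  series_coef (fun i => (a i k.+1)%:Z) (\prod_(j < k.+1) (1 - 'X^(2 ^ j))) n =
  (n == 2 ^ k)%N%:R.
Proof.
set g := fun i => (pow2_parts i k)%:Z.
rewrite (@eq_series_coef _ (fun i => if (2 ^ k <= i)%N then g (i - 2 ^ k)%N else 0)).
  rewrite series_coef_shift series_pow2_parts subn_eq0 eqn_leq andbC.
  by case: leqP.
by move=> i; rewrite a_pow2_parts; case: ifP.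
Qed.

Lemma series_a_double k n :
  series_coef (fun i => (a (2 * i) k.+2)%:Z) ((1 - 'X) * \prod_(j < k.+1) (1 - 'X^(2 ^ j))) n =
  (n == 2 ^ k)%N%:R.
Proof.
rewrite -['X]expr1 series_coef_1subXn -series_a; apply: eq_series_coef => i.
rewrite !a_double; case: i => [|i]; first by rewrite big_ord1 subr0.
by rewrite big_ord_recr /= subSS subn0 PoszD addrAC subrr add0r.
Qed.

Theorem theorem3 :
  a 0 0 = 1%N /\
      (forall n : nat, (1 <= n)%N -> a n 0 = 0%N) /\
      (forall n k : nat, (n < k)%N -> a n k = 0%N) /\
      (forall n : nat, (1 <= n)%N -> a n 1 = 1%N) /\
      (forall m k : nat, (1 <= m)%N -> (1 <= k)%N ->
         a (2 * m) k = (a (2 * m - 1) k + a m (k - 1))%N /\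
         a (2 * m + 1) k = a (2 * m) k) /\
      (forall k : nat, (1 <= k)%N ->
         series_mul_eq (fun m => (a m k)%:Z)
           (\prod_(j < k) (1 - 'X^(2 ^ j)))
           'X^(2 ^ (k - 1))) /\
      (forall k : nat, (2 <= k)%N ->
         series_mul_eq (fun m => (a (2 * m) k)%:Z)
           ((1 - 'X) * \prod_(j < k.-1) (1 - 'X^(2 ^ j)))
           'X^(2 ^ (k - 2))) /\
      (forall n k : nat, (1 <= k)%N ->
         a n k = (if (2 ^ (k - 1) <= n)%N then
                    npart (fun s => all (fun p => is_pow2 p && (p <= 2 ^ (k - 1))%N) s)
                          (n - 2 ^ (k - 1))
                  else 0%N)) /\
    (forall n k : nat, (1 <= k)%N ->
         a n k = npart (fun s => all is_pow2 s && (last 0%N s == 2 ^ (k - 1))%N) n).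
Proof.
split; first exact: a0.
split; first by move=> [|n] //; rewrite a0.
split; first exact: a_gt.
split; first by move=> n n_gt0; rewrite a_pow2_parts n_gt0.
split; first by move=> m [|k] // m_gt0 _; rewrite subSS subn0 a_odd // a_even.
split; first by move=> [|k] // _ n; rewrite coefXn subn1 -series_a.
split; first by move=> [|[|k]] // _ n; rewrite coefXn subn2 -series_a_double.
split=> n [|k] // _; rewrite subn1 /=; last exact: a_npart_pow2_max.
by rewrite a_pow2_parts npart_pow2_bounded_parts.
Qed.
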